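(* For a metrizable topological group $G$, $G$ is NSS if and only if $G$ is STAP.
   Context: A topological group $G$ with neutral element $e$ is NSS if some neighborhood of $e$ contains no nontrivial subgroup of $G$. A sequence $(g_n)$ in $G$ is hyper-converging if $g_n^{m_n}\to e$ for every integer sequence $(m_n)$. $G$ is STAP if no sequence of pairwise distinct elements of $G$ is hyper-converging. *)

From Stdlib Require Import Reals ZArith Arith.
Open Scope R_scope.

Record TopGroup : Type := {
  carrier :> Type;
  mul : carrier -> carrier -> carrier;
  inv : carrier -> carrier;
  one : carrier;
  mul_assoc : forall x y z, mul x (mul y z) = mul (mul x y) z;
  mul_one_l : forall x, mul one x = x;
  mul_inv_l : forall x, mul (inv x) x = one;
  is_open : (carrier -> Prop) -> Prop;
  open_full : is_open (fun _ => True);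
  open_inter : forall U V, is_open U -> is_open V -> is_open (fun x => U x /\ V x);
  open_union : forall (F : (carrier -> Prop) -> Prop),
      (forall U, F U -> is_open U) -> is_open (fun x => exists U, F U /\ U x);
  mul_continuous : forall x y (W : carrier -> Prop), is_open W -> W (mul x y) ->
      exists U V : carrier -> Prop, is_open U /\ is_open V /\ U x /\ V y /\
        (forall a b, U a -> V b -> W (mul a b));
  inv_continuous : forall x (W : carrier -> Prop), is_open W -> W (inv x) ->
      exists U : carrier -> Prop, is_open U /\ U x /\ (forall a, U a -> W (inv a))
}.

Arguments mul {t}. Arguments inv {t}. Arguments one {t}. Arguments is_open {t}.

Definition metrizable (G : TopGroup) : Prop :=
  exists d : G -> G -> R,
    (forall x y, d x y = 0 <-> x = y) /\
    (forall x y, d x y = d y x) /\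
    (forall x y z, d x z <= d x y + d y z) /\
    (forall U : G -> Prop, is_open U <->
       (forall x, U x -> exists eps, eps > 0 /\ forall y, d x y < eps -> U y)).

Fixpoint npow {G : TopGroup} (g : G) (n : nat) : G :=
  match n with
  | O => one
  | S k => mul g (npow g k)
  end.

Definition zpow {G : TopGroup} (g : G) (m : Z) : G :=
  match m with
  | Z0 => one
  | Zpos p => npow g (Pos.to_nat p)
  | Zneg p => inv (npow g (Pos.to_nat p))
  end.

Definition neighborhood {G : TopGroup} (N : G -> Prop) (x : G) : Prop :=
  exists U : G -> Prop, is_open U /\ U x /\ (forall y, U y -> N y).

Definition is_subgroup {G : TopGroup} (H : G -> Prop) : Prop :=
  H one /\ (forall x y, H x -> H y -> H (mul x y)) /\ (forall x, H x -> H (inv x)).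

Definition nontrivial {G : TopGroup} (H : G -> Prop) : Prop :=
  exists h, H h /\ h <> one.

Definition NSS (G : TopGroup) : Prop :=
  exists N : G -> Prop, neighborhood N one /\
    forall H : G -> Prop, is_subgroup H -> (forall h, H h -> N h) -> ~ nontrivial H.

Definition converges {G : TopGroup} (s : nat -> G) (x : G) : Prop :=
  forall U : G -> Prop, is_open U -> U x ->
    exists N : nat, forall n, (N <= n)%nat -> U (s n).

Definition hyper_converging {G : TopGroup} (g : nat -> G) : Prop :=
  forall m : nat -> Z, converges (fun n => zpow (g n) (m n)) one.

Definition STAP (G : TopGroup) : Prop :=
  ~ exists g : nat -> G, (forall i j, i <> j -> g i <> g j) /\ hyper_converging g.

(* NSS -> STAP holds in every topological group.  If U is an open
   neighbourhood of the identity containing no nontrivial subgroup, then every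
   g <> 1 has a power outside U (otherwise the cyclic group generated by g
   would lie in U).  Given a hyper-converging sequence (g_n) of pairwise
   distinct elements, choose for each g_n <> 1 such an escaping exponent m_n;
   then g_n^{m_n} -> 1 forces g_n^{m_n} in U for large n, while at most one
   g_n equals 1 -- a contradiction.

   STAP -> NSS uses a compatible metric d.  If G is not NSS, every ball
   B(1, e) contains a nontrivial subgroup, hence some h_e <> 1 all of whose
   integer powers lie in B(1, e).  Choosing radii r_0 = 1 and
   r_{k+1} = min (r_k / 2, d(1, h_{r_k})) gives elements g_k = h_{r_k} whose
   distances to 1 strictly decrease (so they are pairwise distinct) and all
   of whose powers lie within r_k <= 2^-k of 1 (so the sequence is
   hyper-converging), contradicting STAP. *)

From Stdlib Require Import Reals Lra Lia ZArith Arith Classical ClassicalEpsilon.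
Open Scope R_scope.

Section GroupAlgebra.
Variable G : TopGroup.

Lemma mul_inv_r (x : G) : mul x (inv x) = one.
Proof.
  rewrite <- (mul_one_l G (mul x (inv x))), <- (mul_inv_l G (inv x)) at 1.
  rewrite <- mul_assoc, (mul_assoc G (inv x) x (inv x)), mul_inv_l, mul_one_l.
  apply mul_inv_l.
Qed.

Lemma mul_one_r (x : G) : mul x one = x.
Proof. rewrite <- (mul_inv_l G x), mul_assoc, mul_inv_r. apply mul_one_l. Qed.

Lemma inv_unique (a b : G) : mul a b = one -> a = inv b.
Proof.
  intro Hab. rewrite <- (mul_one_r a), <- (mul_inv_r b), mul_assoc, Hab.
  apply mul_one_l.
Qed.

Lemma inv_inv (x : G) : inv (inv x) = x.
Proof. symmetry. apply inv_unique, mul_inv_r. Qed.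

Lemma inv_mul (x y : G) : inv (mul x y) = mul (inv y) (inv x).
Proof.
  symmetry. apply inv_unique.
  rewrite <- mul_assoc, (mul_assoc G (inv x) x y), mul_inv_l, mul_one_l.
  apply mul_inv_l.
Qed.

Lemma inv_one : inv (@one G) = one.
Proof. symmetry. apply inv_unique, mul_one_l. Qed.

Lemma npow_succ_r (g : G) (n : nat) : npow g (S n) = mul (npow g n) g.
Proof.
  induction n as [|n IH].
  - simpl. rewrite mul_one_r, mul_one_l. reflexivity.
  - change (npow g (S (S n))) with (mul g (npow g (S n))).
    rewrite IH at 1. apply mul_assoc.
Qed.

Lemma zpow_succ (g : G) (a : Z) : zpow g (Z.succ a) = mul g (zpow g a).
Proof.
  destruct a as [|p|p].
  - reflexivity.
  - rewrite <- Pos2Z.inj_succ. unfold zpow. rewrite Pos2Nat.inj_succ. reflexivity.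
  - destruct (Pos.succ_pred_or p) as [-> | <-].
    + simpl. rewrite mul_one_r, mul_inv_r. reflexivity.
    + replace (Z.succ (Zneg (Pos.succ (Pos.pred p)))) with (Zneg (Pos.pred p)) by lia.
      unfold zpow. rewrite Pos2Nat.inj_succ, npow_succ_r, inv_mul, mul_assoc,
        mul_inv_r, mul_one_l.
      reflexivity.
Qed.

Lemma zpow_pred (g : G) (a : Z) : zpow g (Z.pred a) = mul (inv g) (zpow g a).
Proof.
  rewrite <- (Z.succ_pred a) at 2.
  rewrite zpow_succ, mul_assoc, mul_inv_l, mul_one_l. reflexivity.
Qed.

Lemma zpow_add (g : G) (a b : Z) : zpow g (a + b) = mul (zpow g a) (zpow g b).
Proof.
  induction a as [|a IH|a IH] using Z.peano_ind.
  - simpl. rewrite mul_one_l. reflexivity.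
  - rewrite Z.add_succ_l, !zpow_succ, IH, mul_assoc. reflexivity.
  - rewrite Z.add_pred_l, !zpow_pred, IH, mul_assoc. reflexivity.
Qed.

Lemma zpow_opp (g : G) (a : Z) : zpow g (- a) = inv (zpow g a).
Proof.
  destruct a as [|p|p]; simpl.
  - rewrite inv_one. reflexivity.
  - reflexivity.
  - rewrite inv_inv. reflexivity.
Qed.

Lemma zpow_1 (g : G) : zpow g 1 = g.
Proof. simpl. apply mul_one_r. Qed.

Lemma subgroup_zpow (H : G -> Prop) (h : G) (m : Z) :
  is_subgroup H -> H h -> H (zpow h m).
Proof.
  intros [H1 [Hmul Hinv]] Hh.
  assert (Hnpow : forall n, H (npow h n)) by (induction n; simpl; auto).
  destruct m; simpl; auto.
Qed.

Lemma cyclic_subgroup (g : G) : is_subgroup (fun x => exists m, x = zpow g m).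
Proof.
  split; [|split].
  - exists 0%Z. reflexivity.
  - intros x y [a ->] [b ->]. exists (a + b)%Z. symmetry. apply zpow_add.
  - intros x [a ->]. exists (- a)%Z. symmetry. apply zpow_opp.
Qed.

End GroupAlgebra.

(* In an NSS group some open neighbourhood U of 1 is left by a power of every
   nontrivial element, since the cyclic subgroup it generates escapes U. *)
Lemma nss_escaping_powers (G : TopGroup) :
  NSS G -> exists U : G -> Prop, is_open U /\ U one /\
    forall g : G, g <> one -> exists m, ~ U (zpow g m).
Proof.
  intros [N [[U [HU [HU1 HUN]]] Hno_subgroup]].
  exists U. split; [exact HU | split; [exact HU1 |]].
  intros g Hg. apply NNPP. intro Hall.
  apply (Hno_subgroup _ (cyclic_subgroup G g)).
  - intros h [m ->]. apply HUN. apply NNPP. intro Hout. apply Hall. now exists m.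
  - exists g. split; [exists 1%Z; symmetry; apply zpow_1 | exact Hg].
Qed.

Lemma nss_stap (G : TopGroup) : NSS G -> STAP G.
Proof.
  intro Hnss. destruct (nss_escaping_powers G Hnss) as [U [HU [HU1 Hescape]]].
  intros [g [Hdistinct Hhyper]].
  destruct (choice (fun n m => g n <> one -> ~ U (zpow (g n) m))) as [m Hm].
  { intro n. destruct (classic (g n = one)) as [E|E].
    - exists 0%Z. tauto.
    - destruct (Hescape _ E) as [k Hk]. now exists k. }
  destruct (Hhyper m U HU HU1) as [K HK].
  (* Of two distinct terms at most one is the identity. *)
  assert (Hnontriv : exists n, (K <= n)%nat /\ g n <> one).
  { destruct (classic (g K = one)) as [E|E].
    - exists (S K). split; [lia|]. intro E'.
      apply (Hdistinct K (S K)); [lia | congruence].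
    - exists K. split; [lia | exact E]. }
  destruct Hnontriv as [n [Hn Hgn]].
  exact (Hm n Hgn (HK n Hn)).
Qed.

Section MetricFacts.
Variables (G : TopGroup) (d : G -> G -> R).
Hypothesis d_zero : forall x y, d x y = 0 <-> x = y.
Hypothesis d_sym : forall x y, d x y = d y x.
Hypothesis d_triangle : forall x y z, d x z <= d x y + d y z.
Hypothesis d_open : forall U : G -> Prop, is_open U <->
  (forall x, U x -> exists eps, eps > 0 /\ forall y, d x y < eps -> U y).

Lemma dist_nonneg (x y : G) : 0 <= d x y.
Proof.
  pose proof (d_triangle x y x). rewrite (d_sym y x) in H.
  assert (d x x = 0) by (apply d_zero; reflexivity). lra.
Qed.

Lemma ball_open (c : G) (eps : R) : is_open (fun x => d c x < eps).
Proof.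
  apply d_open. intros x Hx. exists (eps - d c x). split; [lra|].
  intros y Hy. pose proof (d_triangle c x y). lra.
Qed.

Lemma not_nss_small_cyclic (eps : R) : ~ NSS G -> eps > 0 ->
  exists h : G, h <> one /\ forall m, d one (zpow h m) < eps.
Proof.
  intros Hnot Heps. apply NNPP. intro Hno_h. apply Hnot.
  exists (fun x => d one x < eps). split.
  - exists (fun x => d one x < eps). split; [apply ball_open|]. split; [|auto].
    replace (d one one) with 0 by (symmetry; apply d_zero; reflexivity). lra.
  - intros H Hsub Hin [h [Hh Hne]]. apply Hno_h. exists h.
    split; [exact Hne|]. intro m. apply Hin, subgroup_zpow; assumption.
Qed.

Lemma converges_of_dist (s : nat -> G) :
  (forall eps, eps > 0 -> exists N, forall n, (N <= n)%nat -> d one (s n) < eps) ->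
  converges s one.
Proof.
  intros Hsmall U HU HU1.
  destruct (proj1 (d_open U) HU one HU1) as [eps [Heps Hball]].
  destruct (Hsmall eps Heps) as [N HN]. exists N. auto.
Qed.

End MetricFacts.

Lemma strictly_decreasing_injective (u : nat -> R) :
  (forall k, u (S k) < u k) -> forall i j, i <> j -> u i <> u j.
Proof.
  intros Hdec.
  assert (Hlt : forall i j, (i < j)%nat -> u j < u i).
  { intros i j Hij. induction Hij as [|j Hij IH].
    - apply Hdec.
    - pose proof (Hdec j). lra. }
  intros i j Hij E. destruct (Nat.lt_total i j) as [L|[L|L]].
  - pose proof (Hlt _ _ L). lra.
  - contradiction.
  - pose proof (Hlt _ _ L). lra.
Qed.

Section HalvingRadii.
Variables (X : Type) (size : X -> R) (f : R -> X).
Hypothesis size_small : forall e, e > 0 -> 0 < size (f e) < e.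

Fixpoint radius (k : nat) : R :=
  match k with
  | O => 1
  | S k => Rmin (radius k / 2) (size (f (radius k)))
  end.

Lemma radius_pos (k : nat) : radius k > 0.
Proof.
  induction k as [|k IH]; simpl; [lra|].
  apply Rmin_glb_lt; [lra | apply size_small, IH].
Qed.

Lemma radius_le_half_pow (k : nat) : radius k <= (/ 2) ^ k.
Proof.
  induction k as [|k IH]; simpl; [lra|].
  pose proof (Rmin_l (radius k / 2) (size (f (radius k)))). lra.
Qed.

Lemma radius_small (eps : R) : eps > 0 ->
  exists N, forall n, (N <= n)%nat -> radius n < eps.
Proof.
  intro Heps.
  destruct (pow_lt_1_zero (/ 2) ltac:(rewrite Rabs_right; lra) eps Heps) as [N HN].
  exists N. intros n Hn. pose proof (HN n Hn). pose proof (Rle_abs ((/ 2) ^ n)).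
  pose proof (radius_le_half_pow n). lra.
Qed.

Lemma size_decreasing (k : nat) : size (f (radius (S k))) < size (f (radius k)).
Proof.
  pose proof (size_small _ (radius_pos (S k))).
  pose proof (Rmin_r (radius k / 2) (size (f (radius k)))). simpl in *. lra.
Qed.

End HalvingRadii.

Lemma stap_nss (G : TopGroup) (hG : metrizable G) : STAP G -> NSS G.
Proof.
  destruct hG as [d [d_zero [d_sym [d_triangle d_open]]]].
  intro Hstap. apply NNPP. intro Hnot.
  destruct (choice (fun (e : R) (h : G) =>
              e > 0 -> h <> one /\ forall m, d one (zpow h m) < e)) as [f Hf].
  { intro e. destruct (Rlt_dec 0 e) as [He|He].
    - destruct (not_nss_small_cyclic G d d_zero d_triangle d_open e Hnot He)
        as [h Hh].
      now exists h.
    - exists one. intro; lra. }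
  assert (Hsize : forall e, e > 0 -> 0 < d one (f e) < e).
  { intros e He. destruct (Hf e He) as [Hne Hpow]. specialize (Hpow 1%Z).
    rewrite zpow_1 in Hpow. split; [|exact Hpow].
    destruct (dist_nonneg G d d_zero d_sym d_triangle one (f e)) as [Hp|Hp];
      [exact Hp|].
    exfalso. apply Hne. symmetry. apply d_zero. auto. }
  set (r := radius G (d one) f).
  apply Hstap. exists (fun k => f (r k)). split.
  - intros i j Hij E.
    apply (strictly_decreasing_injective (fun k => d one (f (r k)))
             (size_decreasing G _ _ Hsize) i j Hij).
    simpl. now rewrite E.
  - intros m. apply (converges_of_dist G d d_open).
    intros eps Heps. destruct (radius_small G (d one) f eps Heps) as [N HN].
    exists N. intros n Hn. specialize (HN n Hn).
    destruct (Hf (r n) (radius_pos G _ _ Hsize n)) as [_ Hpow].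
    specialize (Hpow (m n)). fold r in HN. lra.
Qed.

Theorem theorem5p3 (G : TopGroup) (hG : metrizable G) : NSS G <-> STAP G.
Proof.
  split.
  - apply nss_stap.
  - apply stap_nss. exact hG.
Qed.
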